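(* Let $(G,\tau)$ be a non-discrete metrizable topological group. Then the coarse structure of $(G,\mathcal{S}_\tau)$ does not have a linearly ordered (by inclusion) base. In particular, $(G,\mathcal{S}_\tau)$ is not metrizable.
   Context: $\mathcal{S}_\tau$ is the smallest group ideal on $G$ containing every set $\{x\}\cup\{x_n:n\in\omega\}$ with $x_n\to x$ in $(G,\tau)$. A group ideal on $G$ is a family of subsets containing all finite subsets, closed under subsets and under $(A,B)\mapsto AB^{-1}$; it defines the coarse structure on $G$ with base $\{\{(x,y):x\in Ay\}:A\in\mathcal{I}\}$. A base of a coarse structure $\mathcal{E}$ is a subfamily $\mathcal{E}'$ such that every $E\in\mathcal{E}$ is contained in some member of $\mathcal{E}'$. A coarse space is metrizable iff its coarse structure has a countable base. *)

From Stdlib Require Import Reals List.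
Open Scope R_scope.

Section Defs.
Context {G : Type} (mul : G -> G -> G) (inv : G -> G) (e : G).

Definition is_group : Prop :=
  (forall x y z, mul x (mul y z) = mul (mul x y) z) /\
  (forall x, mul e x = x) /\ (forall x, mul x e = x) /\
  (forall x, mul (inv x) x = e) /\ (forall x, mul x (inv x) = e).

Definition is_topology (tau : (G -> Prop) -> Prop) : Prop :=
  tau (fun _ => True) /\ tau (fun _ => False) /\
  (forall U V, tau U -> tau V -> tau (fun x => U x /\ V x)) /\
  (forall (F : (G -> Prop) -> Prop), (forall U, F U -> tau U) ->
     tau (fun x => exists U, F U /\ U x)).

Definition is_topological_group (tau : (G -> Prop) -> Prop) : Prop :=
  is_group /\ is_topology tau /\
  (forall x y W, tau W -> W (mul x y) ->
     exists U V, tau U /\ tau V /\ U x /\ V y /\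
       (forall u v, U u -> V v -> W (mul u v))) /\
  (forall x W, tau W -> W (inv x) ->
     exists U, tau U /\ U x /\ (forall u, U u -> W (inv u))).

Definition is_metric (d : G -> G -> R) : Prop :=
  (forall x y, 0 <= d x y) /\ (forall x y, d x y = 0 <-> x = y) /\
  (forall x y, d x y = d y x) /\ (forall x y z, d x z <= d x y + d y z).

Definition metrizable_topology (tau : (G -> Prop) -> Prop) : Prop :=
  exists d, is_metric d /\
    forall U, tau U <-> (forall x, U x -> exists eps, 0 < eps /\
                            forall y, d x y < eps -> U y).

Definition discrete_topology (tau : (G -> Prop) -> Prop) : Prop :=
  forall U, tau U.

Definition converges (tau : (G -> Prop) -> Prop) (xs : nat -> G) (x : G) : Prop :=
  forall U, tau U -> U x -> exists N, forall n, (N <= n)%nat -> U (xs n).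

Definition finite_subset (A : G -> Prop) : Prop :=
  exists l : list G, forall x, A x -> In x l.

Definition prod_inv (A B : G -> Prop) : G -> Prop :=
  fun z => exists a b, A a /\ B b /\ z = mul a (inv b).

Definition group_ideal (I : (G -> Prop) -> Prop) : Prop :=
  (forall A, finite_subset A -> I A) /\
  (forall A B, I A -> (forall x, B x -> A x) -> I B) /\
  (forall A B, I A -> I B -> I (prod_inv A B)).

Definition seq_with_limit (xs : nat -> G) (x : G) : G -> Prop :=
  fun z => z = x \/ exists n, z = xs n.

Definition S_tau (tau : (G -> Prop) -> Prop) : (G -> Prop) -> Prop :=
  fun A => forall I, group_ideal I ->
    (forall xs x, converges tau xs x -> I (seq_with_limit xs x)) -> I A.

Definition entourage_of (A : G -> Prop) : G -> G -> Prop :=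
  fun x y => exists a, A a /\ x = mul a y.

Definition coarse_structure (I : (G -> Prop) -> Prop) : (G -> G -> Prop) -> Prop :=
  fun E => exists A, I A /\ forall x y, E x y -> entourage_of A x y.

Definition rel_sub (E F : G -> G -> Prop) : Prop := forall x y, E x y -> F x y.

Definition is_base (C B : (G -> G -> Prop) -> Prop) : Prop :=
  (forall E, B E -> C E) /\ (forall E, C E -> exists E', B E' /\ rel_sub E E').

Definition has_linearly_ordered_base (C : (G -> G -> Prop) -> Prop) : Prop :=
  exists B, is_base C B /\
    forall E1 E2, B E1 -> B E2 -> rel_sub E1 E2 \/ rel_sub E2 E1.

(* A coarse space is metrizable iff its coarse structure has a countable base. *)
Definition coarse_metrizable (C : (G -> G -> Prop) -> Prop) : Prop :=
  exists f : nat -> (G -> G -> Prop),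
    is_base C (fun E => exists n, E = f n).
End Defs.

From Stdlib Require Import Reals List.
From Stdlib Require Import Lra Lia Classical ClassicalEpsilon.
From Stdlib Require Cantor.

Open Scope R_scope.

(* Abstract part (section CoarseBases): for a family I of subsets of G, the fibre over e
   of the entourage E_A is A itself.  Hence the coarse structure of I has no
   countable base as soon as I is "countably undominated" (every sequence
   A_n in I is escaped by one Z in I, i.e. Z is not contained in any A_n), and
   it has no linearly ordered base if moreover I contains a sequence Y_j
   with no upper bound in I: base elements E_j above the E_(Y j) must all lie
   below the base element above E_Z, for Z escaping the sets dominating E_j.

   Topological part (section MetrizableGroup): every member of S_tau lies in
   the range of an enumeration c : nat -> G whose values form a "countably
   compact" family (every sequence of values of c clusters at a value of c);
   this property is stable under the ideal operations.  By a Baire-type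
   nested-ball argument, such a countable family contains no nonempty
   dense-in-itself set.  Taking a sequence x_n -> e of points x_n <> e (which
   exists since tau is not discrete), the semigroup generated by
   X = {e} ∪ {x_n} meets every ball around e in a dense-in-itself set, so it
   escapes every such family arbitrarily near e.  This yields both the
   unbounded sequence (the powers X^j) and countable undomination of S_tau. *)

Section CoarseBases.
Context {G : Type}.
Variables (mul : G -> G -> G) (e : G).
Hypothesis mul_e_r : forall x, mul x e = x.

Definition countably_undominated (I : (G -> Prop) -> Prop) : Prop :=
  forall A : nat -> G -> Prop, (forall n, I (A n)) ->
    exists Z, I Z /\ forall n, exists z, Z z /\ ~ A n z.

Definition has_unbounded_sequence (I : (G -> Prop) -> Prop) : Prop :=
  exists Y : nat -> G -> Prop, (forall j, I (Y j)) /\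
    forall A, I A -> exists j z, Y j z /\ ~ A z.

(* The fibre of E_A over e is A: this is how inclusions of entourages
   are transferred back to inclusions of sets. *)
Lemma entourage_fiber (A : G -> Prop) z : entourage_of mul A z e <-> A z.
Proof.
  split.
  - intros [a [Ha ->]]. rewrite mul_e_r. exact Ha.
  - intros Hz. exists z. split; [exact Hz | now rewrite mul_e_r].
Qed.

Lemma entourage_in_coarse_structure (I : (G -> Prop) -> Prop) A :
  I A -> coarse_structure mul I (entourage_of mul A).
Proof. intros HA. exists A. split; auto. Qed.

Lemma undominated_no_countable_base I :
  countably_undominated I -> ~ coarse_metrizable (coarse_structure mul I).
Proof.
  intros Hund [f [Hf_in Hf_cof]].
  assert (Hdom : forall n, exists A, I A /\ rel_sub (f n) (entourage_of mul A))
    by (intro n; exact (Hf_in _ (ex_intro _ n eq_refl))).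
  destruct (choice _ Hdom) as [A HA].
  destruct (Hund A (fun n => proj1 (HA n))) as [Z [HZ Hesc]].
  destruct (Hf_cof _ (entourage_in_coarse_structure I Z HZ)) as [E [[n ->] HZE]].
  destruct (Hesc n) as [z [Zz Hz]].
  apply Hz, entourage_fiber, (proj2 (HA n)), HZE, entourage_fiber, Zz.
Qed.

Lemma undominated_no_linear_base I :
  has_unbounded_sequence I -> countably_undominated I ->
  ~ has_linearly_ordered_base (coarse_structure mul I).
Proof.
  intros [Y [HY Hunb]] Hund [B [[HB_in HB_cof] Hlin]].
  assert (Hstep : forall j, exists p : (G -> G -> Prop) * (G -> Prop),
    B (fst p) /\ rel_sub (entourage_of mul (Y j)) (fst p) /\
    I (snd p) /\ rel_sub (fst p) (entourage_of mul (snd p))).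
  { intro j. destruct (HB_cof _ (entourage_in_coarse_structure I _ (HY j))) as [E [BE HYE]].
    destruct (HB_in E BE) as [A [HA HEA]]. exists (E, A). simpl. auto. }
  destruct (choice _ Hstep) as [P HP].
  destruct (Hund (fun j => snd (P j)) (fun j => proj1 (proj2 (proj2 (HP j)))))
    as [Z [HZ Hesc]].
  destruct (HB_cof _ (entourage_in_coarse_structure I Z HZ)) as [E' [BE' HZE']].
  destruct (HB_in E' BE') as [A' [HA' HEA']].
  (* E' ⊆ E_j is impossible since Z escapes A_j, so all E_j lie below E' *)
  assert (Hbelow : forall j, rel_sub (fst (P j)) E').
  { intro j. destruct (HP j) as [BEj [_ [_ HEjA]]].
    destruct (Hlin _ _ BEj BE') as [H|H]; [exact H|exfalso].
    destruct (Hesc j) as [z [Zz Hz]].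
    apply Hz, entourage_fiber, HEjA, H, HZE', entourage_fiber, Zz. }
  destruct (Hunb A' HA') as [j [y [Yy Hy]]].
  apply Hy, entourage_fiber, HEA', (Hbelow j), (proj1 (proj2 (HP j))), entourage_fiber, Yy.
Qed.

End CoarseBases.

Section MetrizableGroup.
Variables (G : Type) (mul : G -> G -> G) (inv : G -> G) (e : G)
  (tau : (G -> Prop) -> Prop) (d : G -> G -> R).
Hypothesis assoc : forall x y z, mul x (mul y z) = mul (mul x y) z.
Hypothesis mul_e_l : forall x, mul e x = x.
Hypothesis mul_e_r : forall x, mul x e = x.
Hypothesis inv_l : forall x, mul (inv x) x = e.
Hypothesis mul_cont : forall x y W, tau W -> W (mul x y) ->
  exists U V, tau U /\ tau V /\ U x /\ V y /\ (forall u v, U u -> V v -> W (mul u v)).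
Hypothesis inv_cont : forall x W, tau W -> W (inv x) ->
  exists U, tau U /\ U x /\ (forall u, U u -> W (inv u)).
Hypothesis d_nonneg : forall x y, 0 <= d x y.
Hypothesis d_zero : forall x y, d x y = 0 <-> x = y.
Hypothesis d_sym : forall x y, d x y = d y x.
Hypothesis d_tri : forall x y z, d x z <= d x y + d y z.
Hypothesis tau_metric : forall U, tau U <->
  (forall x, U x -> exists eps, 0 < eps /\ forall y, d x y < eps -> U y).

Lemma d_refl x : d x x = 0.
Proof. now apply d_zero. Qed.

Lemma dist_pos x y : x <> y -> 0 < d x y.
Proof.
  intros Hxy. destruct (Rle_lt_or_eq_dec _ _ (d_nonneg x y)) as [H|H]; [exact H|].
  exfalso. apply Hxy, d_zero. now symmetry.
Qed.

Lemma ball_open x r : tau (fun y => d x y < r).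
Proof.
  apply tau_metric. intros y Hy. exists (r - d x y). split; [lra|].
  intros z Hz. pose proof (d_tri x y z). lra.
Qed.

Lemma open_contains_ball U x : tau U -> U x ->
  exists eps, 0 < eps /\ forall y, d x y < eps -> U y.
Proof. intros HU Ux. exact (proj1 (tau_metric U) HU x Ux). Qed.

Lemma inv_succ_pos n : 0 < / INR (S n).
Proof. apply Rinv_0_lt_compat, lt_0_INR. lia. Qed.

Lemma inv_succ_lt eps : 0 < eps -> exists K, / INR (S K) < eps.
Proof.
  intro Heps. destruct (archimed_cor1 eps Heps) as [N [HN HN0]].
  exists N. eapply Rle_lt_trans; [|exact HN].
  apply Rinv_le_contravar; [apply lt_0_INR; exact HN0 | apply le_INR; lia].
Qed.

Lemma inv_succ_le k K : (K <= k)%nat -> / INR (S k) <= / INR (S K).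
Proof.
  intro H. apply Rinv_le_contravar; [apply lt_0_INR; lia | apply le_INR; lia].
Qed.

Lemma converges_of_dist (z : nat -> G) x :
  (forall n, d x (z n) < / INR (S n)) -> converges tau z x.
Proof.
  intros Hz U HU Ux. destruct (open_contains_ball U x HU Ux) as [eps [Heps Hball]].
  destruct (inv_succ_lt eps Heps) as [K HK]. exists K. intros n Hn. apply Hball.
  pose proof (Hz n). pose proof (inv_succ_le n K Hn). lra.
Qed.

Lemma nondiscrete_accumulation : ~ discrete_topology tau ->
  exists x, forall eps, 0 < eps -> exists y, y <> x /\ d x y < eps.
Proof.
  intros Hnd. apply NNPP. intros Hiso. apply Hnd. intros U. apply tau_metric.
  intros x Ux.
  assert (Hisox : exists eps, 0 < eps /\ forall y, d x y < eps -> y = x).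
  { apply NNPP. intros H. apply Hiso. exists x. intros eps Heps.
    apply NNPP. intros H'. apply H. exists eps. split; [exact Heps|].
    intros y Hy. apply NNPP. intros Hyx. apply H'. exists y. auto. }
  destruct Hisox as [eps [Heps Hball]]. exists eps. split; [exact Heps|].
  intros y Hy. rewrite (Hball y Hy). exact Ux.
Qed.

Definition cluster_point (y : nat -> G) (l : G) : Prop :=
  forall eps, 0 < eps -> forall N, exists k, (N <= k)%nat /\ d (y k) l < eps.

Definition countably_compact_enum (c : nat -> G) : Prop :=
  forall y : nat -> G, (forall k, exists n, c n = y k) -> exists m, cluster_point y (c m).

Lemma not_cluster y l : ~ cluster_point y l ->
  exists eps, 0 < eps /\ exists N, forall k, (N <= k)%nat -> eps <= d (y k) l.
Proof.
  intro H. apply NNPP. intro H2. apply H. intros eps Heps N. apply NNPP. intro H3.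
  apply H2. exists eps. split; [exact Heps|]. exists N. intros k Hk.
  apply Rnot_lt_le. intro H4. apply H3. exists k. auto.
Qed.

Lemma finitely_valued_cluster (f : nat -> G) M : forall (y : nat -> G) N,
  (forall k, (N <= k)%nat -> exists i, (i < M)%nat /\ y k = f i) ->
  exists i, cluster_point y (f i).
Proof.
  induction M as [|M IH]; intros y N Hy.
  - destruct (Hy N (le_n N)) as [i [Hi _]]. lia.
  - destruct (classic (cluster_point y (f M))) as [Hc|Hnc]; [now exists M|].
    destruct (not_cluster y (f M) Hnc) as [eps [Heps [N' HN']]].
    apply (IH y (max N N')). intros k Hk.
    destruct (Hy k ltac:(lia)) as [i [Hi Hyk]].
    destruct (Nat.eq_dec i M) as [->|Hne].
    + specialize (HN' k ltac:(lia)). rewrite Hyk, d_refl in HN'. lra.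
    + exists i. split; [lia|exact Hyk].
Qed.

Lemma cluster_subseq y l : cluster_point y l -> exists phi : nat -> nat,
  forall k, (k <= phi k)%nat /\ d (y (phi k)) l < / INR (S k).
Proof.
  intro H. apply (choice (fun k n => (k <= n)%nat /\ d (y n) l < / INR (S k))).
  intro k. apply H, inv_succ_pos.
Qed.

Definition dense_in_itself (T : G -> Prop) : Prop :=
  forall p, T p -> forall eps, 0 < eps -> exists q, T q /\ q <> p /\ d p q < eps.

Lemma shrink_ball T a p r : dense_in_itself T -> T p -> 0 < r ->
  exists q s, T q /\ 0 < s /\ d p q + s <= r /\ s < d a q.
Proof.
  intros Hdense Tp Hr. destruct (classic (a = p)) as [->|Hap].
  - destruct (Hdense p Tp (r / 2) ltac:(lra)) as [q [Tq [Hqp Hpq]]].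
    assert (Hpos : 0 < d p q) by (apply dist_pos; congruence).
    exists q, (Rmin (r / 2) (d p q / 2)).
    pose proof (Rmin_l (r / 2) (d p q / 2)). pose proof (Rmin_r (r / 2) (d p q / 2)).
    assert (0 < Rmin (r / 2) (d p q / 2)) by (apply Rmin_glb_lt; lra).
    repeat split; auto; lra.
  - assert (Hpos : 0 < d a p) by (apply dist_pos; exact Hap).
    exists p, (Rmin (r / 2) (d a p / 2)). rewrite d_refl.
    pose proof (Rmin_l (r / 2) (d a p / 2)). pose proof (Rmin_r (r / 2) (d a p / 2)).
    assert (0 < Rmin (r / 2) (d a p / 2)) by (apply Rmin_glb_lt; lra).
    repeat split; auto; lra.
Qed.

Lemma nested_balls (c : nat -> G) T t0 : T t0 -> dense_in_itself T ->
  exists (p : nat -> G) (r : nat -> R), forall k, T (p k) /\ 0 < r k /\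
    d (p k) (p (S k)) + r (S k) <= r k /\ r (S k) < d (c k) (p (S k)).
Proof.
  intros Tt0 Hdense.
  assert (Hstep : forall ks : nat * (G * R), exists s' : G * R,
    T (fst (snd ks)) -> 0 < snd (snd ks) ->
    T (fst s') /\ 0 < snd s' /\ d (fst (snd ks)) (fst s') + snd s' <= snd (snd ks) /\
    snd s' < d (c (fst ks)) (fst s')).
  { intros [k [p r]]; simpl.
    destruct (classic (T p /\ 0 < r)) as [[Tp Hr]|Hn].
    - destruct (shrink_ball T (c k) p r Hdense Tp Hr) as [q [s Hqs]].
      exists (q, s). auto.
    - exists (p, r). intros Tp Hr. exfalso. auto. }
  destruct (choice _ Hstep) as [next Hnext].
  set (pr := fun k => nat_rect (fun _ => (G * R)%type) (t0, 1)
                        (fun k s => next (k, s)) k).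
  assert (Hpr_S : forall k, pr (S k) = next (k, pr k)) by reflexivity.
  assert (Hgood : forall k, T (fst (pr k)) /\ 0 < snd (pr k)).
  { induction k as [|k [Tk Hk]]; [simpl; split; [exact Tt0 | lra]|].
    rewrite Hpr_S. destruct (Hnext (k, pr k) Tk Hk) as [Tk' [Hk' _]]. auto. }
  exists (fun k => fst (pr k)), (fun k => snd (pr k)). intro k.
  destruct (Hgood k) as [Tk Hk].
  destruct (Hnext (k, pr k) Tk Hk) as [_ [_ [Hin Hout]]].
  rewrite Hpr_S. auto.
Qed.

Lemma nested_dist (p : nat -> G) (r : nat -> R) :
  (forall k, d (p k) (p (S k)) + r (S k) <= r k) ->
  forall k m, d (p k) (p (k + m)%nat) + r (k + m)%nat <= r k.
Proof.
  intros Hstep k m. induction m as [|m IH].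
  - rewrite Nat.add_0_r, d_refl. lra.
  - replace (k + S m)%nat with (S (k + m)) by lia.
    pose proof (Hstep (k + m)%nat). pose proof (d_tri (p k) (p (k + m)%nat) (p (S (k + m)))).
    lra.
Qed.

Lemma no_dense_in_itself_subset c T t0 :
  countably_compact_enum c -> T t0 -> dense_in_itself T ->
  ~ (forall t, T t -> exists n, c n = t).
Proof.
  intros Hc Tt0 Hdense Hcov.
  destruct (nested_balls c T t0 Tt0 Hdense) as [p [r Hpr]].
  pose proof (nested_dist p r (fun k => proj1 (proj2 (proj2 (Hpr k))))) as Hnest.
  destruct (Hc p (fun k => Hcov _ (proj1 (Hpr k)))) as [j Hj].
  (* from step j+1 on, the centres stay at distance > d (c j) (p (S j)) - r (S j) > 0 *)
  destruct (Hpr j) as [_ [_ [_ Hsep]]].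
  destruct (Hpr (S j)) as [_ [Hr _]].
  destruct (Hj (d (c j) (p (S j)) - r (S j)) ltac:(lra) (S j)) as [k [Hjk Hdk]].
  specialize (Hnest (S j) (k - S j)%nat).
  replace (S j + (k - S j))%nat with k in Hnest by lia.
  destruct (Hpr k) as [_ [Hrk _]].
  pose proof (d_tri (c j) (p k) (p (S j))) as Htri.
  rewrite (d_sym (c j) (p k)), (d_sym (p k) (p (S j))) in Htri. lra.
Qed.

Lemma mul_cancel_l a x y : mul a x = mul a y -> x = y.
Proof.
  intro H. rewrite <- (mul_e_l x), <- (mul_e_l y), <- (inv_l a), <- !assoc, H.
  reflexivity.
Qed.

Lemma inv_inv x : inv (inv x) = x.
Proof.
  rewrite <- (mul_e_r (inv (inv x))), <- (inv_l x), assoc, inv_l, mul_e_l.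
  reflexivity.
Qed.

Lemma left_translation_continuous a b eps : 0 < eps -> exists del, 0 < del /\
  forall v, d b v < del -> d (mul a b) (mul a v) < eps.
Proof.
  intro Heps.
  destruct (mul_cont a b (fun z => d (mul a b) z < eps) (ball_open _ _)
     ltac:(simpl; rewrite d_refl; exact Heps)) as [U [V [HU [HV [Ua [Vb Huv]]]]]].
  destruct (open_contains_ball V b HV Vb) as [del [Hdel Hball]].
  exists del. split; [exact Hdel|]. intros v Hv. exact (Huv a v Ua (Hball v Hv)).
Qed.

Lemma division_continuous a b eps : 0 < eps -> exists del, 0 < del /\
  forall u v, d a u < del -> d b v < del -> d (mul a (inv b)) (mul u (inv v)) < eps.
Proof.
  intro Heps.
  destruct (mul_cont a (inv b) (fun z => d (mul a (inv b)) z < eps) (ball_open _ _)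
     ltac:(simpl; rewrite d_refl; exact Heps)) as [U [V [HU [HV [Ua [Vb Huv]]]]]].
  destruct (inv_cont b V HV Vb) as [U' [HU' [U'b HU'inv]]].
  destruct (open_contains_ball U a HU Ua) as [d1 [Hd1 Hball1]].
  destruct (open_contains_ball U' b HU' U'b) as [d2 [Hd2 Hball2]].
  exists (Rmin d1 d2). split; [now apply Rmin_glb_lt|].
  pose proof (Rmin_l d1 d2). pose proof (Rmin_r d1 d2).
  intros u v Hu Hv. apply Huv; [apply Hball1 | apply HU'inv, Hball2]; lra.
Qed.

Lemma identity_accumulation :
  (exists x, forall eps, 0 < eps -> exists y, y <> x /\ d x y < eps) ->
  forall eps, 0 < eps -> exists y, y <> e /\ d e y < eps.
Proof.
  intros [x Hx] eps Heps.
  destruct (left_translation_continuous (inv x) x eps Heps) as [del [Hdel Hnear]].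
  destruct (Hx del Hdel) as [y [Hyx Hdy]].
  exists (mul (inv x) y). split.
  - intro H. apply Hyx, (mul_cancel_l (inv x)). rewrite H, inv_l. reflexivity.
  - rewrite <- (inv_l x). exact (Hnear y Hdy).
Qed.

Definition compactly_enumerated (A : G -> Prop) : Prop :=
  exists c, countably_compact_enum c /\ forall a, A a -> exists n, c n = a.

Lemma compactly_enumerated_finite A : finite_subset A -> compactly_enumerated A.
Proof.
  intros [l Hl]. exists (fun n => nth n l e). split.
  - intros y Hy. apply (finitely_valued_cluster (fun n => nth n l e) (S (length l)) y O).
    intros k _. destruct (Hy k) as [n Hn].
    destruct (Nat.lt_ge_cases n (S (length l))) as [Hlt|Hge].
    + exists n. auto.
    + exists (length l). split; [lia|]. rewrite <- Hn, !nth_overflow; auto; lia.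
  - intros a Ha. destruct (In_nth l a e (Hl a Ha)) as [n [_ Hn]]. now exists n.
Qed.

Lemma compactly_enumerated_sub A B :
  compactly_enumerated A -> (forall x, B x -> A x) -> compactly_enumerated B.
Proof. intros [c [Hc Hcov]] HB. exists c. split; auto. Qed.

Lemma compactly_enumerated_seq xs x :
  converges tau xs x -> compactly_enumerated (seq_with_limit xs x).
Proof.
  intro Hconv. set (c := fun n => match n with O => x | S m => xs m end).
  exists c. split.
  - intros y Hy. destruct (classic (cluster_point y x)) as [Hx|Hnx]; [now exists O|].
    (* y stays away from x, hence eventually takes only the finitely many
       values of xs outside a ball around x *)
    destruct (not_cluster y x Hnx) as [eps [Heps [N HN]]].
    destruct (Hconv _ (ball_open x eps) ltac:(simpl; rewrite d_refl; exact Heps))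
      as [N0 HN0].
    apply (finitely_valued_cluster c (S N0) y N). intros k Hk.
    specialize (HN k Hk). destruct (Hy k) as [[|m] Hm]; simpl in Hm.
    + rewrite <- Hm, d_refl in HN. lra.
    + exists (S m). split; [|now symmetry].
      destruct (Nat.lt_ge_cases m N0) as [Hlt|Hge]; [lia|].
      specialize (HN0 m Hge). simpl in HN0. rewrite <- Hm, d_sym in HN. lra.
  - intros a [Ha|[n Ha]]; [exists O | exists (S n)]; auto.
Qed.

Definition div_enum (c1 c2 : nat -> G) (n : nat) : G :=
  mul (c1 (fst (Cantor.of_nat n))) (inv (c2 (snd (Cantor.of_nat n)))).

Lemma div_enum_pair c1 c2 i j :
  div_enum c1 c2 (Cantor.to_nat (i, j)) = mul (c1 i) (inv (c2 j)).
Proof. unfold div_enum. now rewrite Cantor.cancel_of_to. Qed.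

Lemma countably_compact_enum_div c1 c2 :
  countably_compact_enum c1 -> countably_compact_enum c2 ->
  countably_compact_enum (div_enum c1 c2).
Proof.
  intros Hc1 Hc2 y Hy.
  destruct (choice (fun k n => div_enum c1 c2 n = y k) Hy) as [idx Hidx].
  set (a := fun k => c1 (fst (Cantor.of_nat (idx k)))).
  set (b := fun k => c2 (snd (Cantor.of_nat (idx k)))).
  (* a clusters at c1 m1; along a subsequence converging to it, b clusters at c2 m2 *)
  destruct (Hc1 a (fun k => ex_intro _ _ eq_refl)) as [m1 Hm1].
  destruct (cluster_subseq a _ Hm1) as [phi Hphi].
  destruct (Hc2 (fun k => b (phi k)) (fun k => ex_intro _ _ eq_refl)) as [m2 Hm2].
  exists (Cantor.to_nat (m1, m2)). rewrite div_enum_pair.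
  intros eps Heps N.
  destruct (division_continuous (c1 m1) (c2 m2) eps Heps) as [del [Hdel Hnear]].
  destruct (inv_succ_lt del Hdel) as [K HK].
  destruct (Hm2 del Hdel (max N K)) as [k [Hk Hbk]].
  destruct (Hphi k) as [Hphik Hak]. unfold a in Hak. unfold b in Hbk.
  exists (phi k). split; [lia|].
  rewrite <- Hidx, d_sym. unfold div_enum. apply Hnear.
  - rewrite d_sym. pose proof (inv_succ_le k K ltac:(lia)). lra.
  - rewrite d_sym. exact Hbk.
Qed.

Lemma compactly_enumerated_div A B : compactly_enumerated A -> compactly_enumerated B ->
  compactly_enumerated (prod_inv mul inv A B).
Proof.
  intros [c1 [Hc1 Hcov1]] [c2 [Hc2 Hcov2]].
  exists (div_enum c1 c2). split; [now apply countably_compact_enum_div|].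
  intros z [a [b [Ha [Hb ->]]]].
  destruct (Hcov1 a Ha) as [i <-]. destruct (Hcov2 b Hb) as [j <-].
  exists (Cantor.to_nat (i, j)). apply div_enum_pair.
Qed.

Lemma S_tau_compactly_enumerated A : S_tau mul inv tau A -> compactly_enumerated A.
Proof.
  intros HA. apply HA.
  - split; [|split].
    + exact compactly_enumerated_finite.
    + exact compactly_enumerated_sub.
    + exact compactly_enumerated_div.
  - exact compactly_enumerated_seq.
Qed.

Lemma S_tau_finite A : finite_subset A -> S_tau mul inv tau A.
Proof. intros HA I [Hfin _] _. auto. Qed.

Lemma S_tau_sub A B : S_tau mul inv tau A -> (forall x, B x -> A x) -> S_tau mul inv tau B.
Proof. intros HA HB I HI Hgen. apply (proj1 (proj2 HI) A); [exact (HA I HI Hgen) | exact HB]. Qed.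

Lemma S_tau_div A B : S_tau mul inv tau A -> S_tau mul inv tau B ->
  S_tau mul inv tau (prod_inv mul inv A B).
Proof. intros HA HB I HI Hgen. apply (proj2 (proj2 HI)); [exact (HA I HI Hgen) | exact (HB I HI Hgen)]. Qed.

Lemma S_tau_seq xs x : converges tau xs x -> S_tau mul inv tau (seq_with_limit xs x).
Proof. intros H I _ Hgen. auto. Qed.

Fixpoint powers (X : G -> Prop) (k : nat) : G -> Prop :=
  match k with
  | O => fun z => z = e
  | S k => fun z => exists s w, powers X k s /\ X w /\ z = mul s w
  end.

Lemma powers_S_tau X k : S_tau mul inv tau X -> S_tau mul inv tau (powers X k).
Proof.
  intro HX.
  assert (He : S_tau mul inv tau (fun z => z = e))
    by (apply S_tau_finite; exists (e :: nil); intros x ->; now left).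
  induction k as [|k IH]; [exact He|].
  (* X^(k+1) ⊆ X^k (e X^-1)^-1 *)
  apply (S_tau_sub (prod_inv mul inv (powers X k) (prod_inv mul inv (fun z => z = e) X))).
  - apply S_tau_div; [exact IH | now apply S_tau_div].
  - intros z [s [w [Hs [Hw ->]]]]. exists s, (mul e (inv w)). repeat split; auto.
    + now exists e, w.
    + now rewrite mul_e_l, inv_inv.
Qed.

Lemma powers_dense_in_itself xs r :
  (forall n, xs n <> e /\ d e (xs n) < / INR (S n)) ->
  dense_in_itself (fun z => (exists k, powers (seq_with_limit xs e) k z) /\ d e z < r).
Proof.
  intros Hxs p [[k Hp] Hdp] eps Heps.
  set (eps' := Rmin eps (r - d e p)).
  assert (Heps' : 0 < eps') by (apply Rmin_glb_lt; lra).
  destruct (left_translation_continuous p e eps' Heps') as [del [Hdel Hnear]].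
  destruct (inv_succ_lt del Hdel) as [K HK].
  destruct (Hxs K) as [HxK HdK].
  assert (Hpq : d p (mul p (xs K)) < eps').
  { rewrite <- (mul_e_r p) at 1. apply Hnear. lra. }
  assert (Hle1 : eps' <= eps) by apply Rmin_l.
  assert (Hle2 : eps' <= r - d e p) by apply Rmin_r.
  exists (mul p (xs K)). split; [split|split].
  - exists (S k), p, (xs K). repeat split; auto. right. now exists K.
  - pose proof (d_tri e p (mul p (xs K))). lra.
  - intro Heq. apply HxK, (mul_cancel_l p). rewrite Heq, mul_e_r. reflexivity.
  - lra.
Qed.

Lemma escape xs c r :
  (forall n, xs n <> e /\ d e (xs n) < / INR (S n)) ->
  countably_compact_enum c -> 0 < r ->
  exists z, (exists k, powers (seq_with_limit xs e) k z) /\ d e z < r /\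
    forall n, c n <> z.
Proof.
  intros Hxs Hc Hr. apply NNPP. intro Hno.
  apply (no_dense_in_itself_subset c
    (fun z => (exists k, powers (seq_with_limit xs e) k z) /\ d e z < r) e Hc).
  - split; [now exists O | rewrite d_refl; exact Hr].
  - now apply powers_dense_in_itself.
  - intros t [Ht Hdt]. apply NNPP. intro Hnc. apply Hno. exists t. repeat split; auto.
    intros n Hn. apply Hnc. now exists n.
Qed.

Hypothesis e_accumulation : forall eps, 0 < eps -> exists y, y <> e /\ d e y < eps.

Lemma null_sequence : exists xs : nat -> G,
  forall n, xs n <> e /\ d e (xs n) < / INR (S n).
Proof.
  apply (choice (fun n y => y <> e /\ d e y < / INR (S n))).
  intro n. apply e_accumulation, inv_succ_pos.
Qed.

Lemma S_tau_countably_undominated : countably_undominated (S_tau mul inv tau).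
Proof.
  intros A HA. destruct null_sequence as [xs Hxs].
  assert (Henum : forall n, exists c,
    countably_compact_enum c /\ forall a, A n a -> exists m, c m = a)
    by (intro n; apply S_tau_compactly_enumerated, HA).
  destruct (choice _ Henum) as [c Hc].
  destruct (choice (fun n z => d e z < / INR (S n) /\ forall m, c n m <> z)) as [z Hz].
  { intro n. destruct (escape xs (c n) _ Hxs (proj1 (Hc n)) (inv_succ_pos n))
      as [z [_ Hz]]. now exists z. }
  exists (seq_with_limit z e). split.
  - apply S_tau_seq, converges_of_dist. intro n. apply Hz.
  - intro n. exists (z n). split; [right; now exists n|].
    intro Hzn. destruct (proj2 (Hc n) _ Hzn) as [m Hm]. exact (proj2 (Hz n) m Hm).
Qed.

Lemma S_tau_has_unbounded_sequence : has_unbounded_sequence (S_tau mul inv tau).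
Proof.
  destruct null_sequence as [xs Hxs].
  exists (powers (seq_with_limit xs e)). split.
  - intro j. apply powers_S_tau, S_tau_seq, converges_of_dist. intro n. apply Hxs.
  - intros A HA. destruct (S_tau_compactly_enumerated A HA) as [c [Hc Hcov]].
    destruct (escape xs c 1 Hxs Hc Rlt_0_1) as [z [[j Hj] [_ Hz]]].
    exists j, z. split; [exact Hj|].
    intro Az. destruct (Hcov z Az) as [n Hn]. exact (Hz n Hn).
Qed.

End MetrizableGroup.

Theorem theorem8 (G : Type) (mul : G -> G -> G) (inv : G -> G) (e : G)
  (tau : (G -> Prop) -> Prop)
  (Htg : is_topological_group mul inv e tau)
  (Hmet : metrizable_topology tau)
  (Hnd : ~ discrete_topology tau) :
  ~ has_linearly_ordered_base (coarse_structure mul (S_tau mul inv tau)) /\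
  ~ coarse_metrizable (coarse_structure mul (S_tau mul inv tau)).
Proof.
  destruct Htg as [[assoc [mul_e_l [mul_e_r [inv_l _]]]] [_ [mul_cont inv_cont]]].
  destruct Hmet as [d [[d_nonneg [d_zero [d_sym d_tri]]] tau_metric]].
  assert (e_acc : forall eps, 0 < eps -> exists y, y <> e /\ d e y < eps).
  { eapply identity_accumulation; eauto. eapply nondiscrete_accumulation; eauto. }
  split.
  - apply (undominated_no_linear_base mul e mul_e_r).
    + eapply S_tau_has_unbounded_sequence; eauto.
    + eapply S_tau_countably_undominated; eauto.
  - apply (undominated_no_countable_base mul e mul_e_r).
    eapply S_tau_countably_undominated; eauto.
Qed.
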